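(* (i) The following monomials of $P_5$ are strictly inadmissible: $x_1^{3}x_2^{5}x_3^{9}x_4^{14}x_5^{14}$, $x_1^{3}x_2^{5}x_3^{14}x_4^{9}x_5^{14}$, $x_1^{3}x_2^{7}x_3^{11}x_4^{12}x_5^{12}$, $x_1^{3}x_2^{7}x_3^{13}x_4^{8}x_5^{14}$, $x_1^{3}x_2^{7}x_3^{13}x_4^{14}x_5^{8}$, $x_1^{3}x_2^{12}x_3^{3}x_4^{13}x_5^{14}$, $x_1^{7}x_2^{3}x_3^{11}x_4^{12}x_5^{12}$, $x_1^{7}x_2^{3}x_3^{13}x_4^{8}x_5^{14}$, $x_1^{7}x_2^{3}x_3^{13}x_4^{14}x_5^{8}$, $x_1^{7}x_2^{7}x_3^{9}x_4^{14}x_5^{8}$, $x_1^{7}x_2^{9}x_3^{7}x_4^{10}x_5^{12}$, $x_1^{7}x_2^{11}x_3^{3}x_4^{12}x_5^{12}$, $x_1^{7}x_2^{11}x_3^{5}x_4^{8}x_5^{14}$, $x_1^{7}x_2^{11}x_3^{5}x_4^{14}x_5^{8}$, $x_1^{7}x_2^{11}x_3^{13}x_4^{6}x_5^{8}$. (ii) The following monomials of $P_5$ are strongly inadmissible: $x_1^{3}x_2^{5}x_3^{14}x_4^{11}x_5^{12}$, $x_1^{3}x_2^{13}x_3^{6}x_4^{11}x_5^{12}$, $x_1^{3}x_2^{13}x_3^{7}x_4^{10}x_5^{12}$, $x_1^{3}x_2^{13}x_3^{14}x_4^{3}x_5^{12}$.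
   Context: $P_5=\mathbb F_2[x_1,\dots,x_5]$, $\deg x_i=1$, a module over the mod-2 Steenrod algebra $\mathcal A$. $\mathcal A(s-1)$ is the sub-Hopf algebra generated by $Sq^r$, $0\le r<2^s$, with augmentation ideal $\mathcal A(s-1)^+$. For $x=x_1^{a_1}\cdots x_5^{a_5}$: weight vector $\omega_i(x)=\sum_j\alpha_{i-1}(a_j)$ ($\alpha_r(a)$ the $r$-th binary digit), exponent vector $\sigma(x)=(a_1,\dots,a_5)$, both ordered left-lexicographically; for monomials of equal degree, $x<y$ iff $\omega(x)<\omega(y)$, or $\omega(x)=\omega(y)$ and $\sigma(x)<\sigma(y)$. $P_5^-(\omega)$ is spanned by monomials $y$ of degree $\sum_i2^{i-1}\omega_i$ with $\omega(y)<\omega$. Minimal spike of degree $n$: if $\mu(n)=s\le5$, where $\mu(n)$ is the least $r$ with $n=\sum_{i=1}^r(2^{u_i}-1)$, $u_i>0$, write uniquely $n=\sum_{i=1}^s(2^{e_i}-1)$, $e_1>\dots>e_{s-1}\ge e_s>0$; the minimal spike is $z=\prod_{i=1}^sx_i^{2^{e_i}-1}$. $\mathcal P_{(5,n)}$ is spanned by monomials $x$ of degree $n$ with $\sum_{j=1}^h2^{j-1}\omega_j(x)<\sum_{j=1}^h2^{j-1}\omega_j(z)$ for some $h\ge1$. With $s=\max\{i:\omega_i(x)>0\}$: a monomial $x$ is strictly inadmissible if there are monomials $y_1,\dots,y_r<x$ with $x+\sum_jy_j\in\mathcal A(s-1)^+P_5+P_5^-(\omega(x))$; a monomial $x$ of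 degree $n$ is strongly inadmissible if there are monomials $y_1,\dots,y_t$ with $\omega(y_u)=\omega(x)$, $y_u<x$, and $x+\sum_uy_u\in\mathcal A(s-1)^+P_5+P_5^-(\omega(x))+\mathcal P_{(5,n)}$. *)

From HB Require Import structures.
From mathcomp Require Import all_boot all_order all_algebra.
From mathcomp Require Import mpoly.
Set Implicit Arguments. Unset Strict Implicit. Unset Printing Implicit Defensive.
Import GRing.Theory.
Local Open Scope ring_scope.

Notation P5 := {mpoly 'F_2[5]}.
Notation mono := 'X_{1..5}.

Definition mono5 (a b c d e : nat) : mono :=
  [multinom nth 0%N [:: a; b; c; d; e] i | i < 5].

(* ---- Steenrod squares on P_5 (Cartan formula, Sq^k x^a = C(a,k) x^(a+k)) ---- *)
Definition sq_mono (r : nat) (m : mono) : P5 :=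
  \sum_(k : {ffun 'I_5 -> 'I_r.+1} | (\sum_(i < 5) (k i : nat))%N == r)
     (\prod_(i < 5) 'C(m i, k i))%N%:R *: 'X_[[multinom (m i + k i)%N | i < 5]].

Definition Sq (r : nat) (p : P5) : P5 :=
  \sum_(m <- msupp p) p@_m *: sq_mono r m.

Definition iter_Sq (rs : seq nat) (p : P5) : P5 := foldr Sq p rs.

(* A(s-1)^+ P_5 : the span of all theta(p) with theta a nonempty product of
   generators Sq^r, 0 < r < 2^s, of A(s-1) (these products span A(s-1)^+). *)
Definition in_Aplus (s : nat) (p : P5) : Prop :=
  exists l : seq (seq nat * P5),
    all (fun t => (t.1 != [::]) && all (fun r => (0 < r < 2 ^ s)%N) t.1) l /\
    p = \sum_(t <- l) iter_Sq t.1 t.2.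

Definition alpha (k a : nat) : nat := odd (a %/ 2 ^ k).

(* omega m i = omega_i(m) for i >= 1 (omega m 0 is unused, set to 0) *)
Definition omega (m : mono) (i : nat) : nat :=
  if i is i'.+1 then (\sum_(j < 5) alpha i' (m j))%N else 0%N.

Definition wlt (w1 w2 : nat -> nat) : Prop :=
  exists i, (0 < i)%N /\ (forall j, (0 < j < i)%N -> w1 j = w2 j) /\ (w1 i < w2 i)%N.

Definition slt (m1 m2 : mono) : Prop :=
  exists i : 'I_5, (forall j : 'I_5, (j < i)%N -> m1 j = m2 j) /\ (m1 i < m2 i)%N.

Definition mlt (x y : mono) : Prop :=
  mdeg x = mdeg y /\
  (wlt (omega x) (omega y) \/ ((forall i, omega x i = omega y i) /\ slt x y)).

Definition top_weight (x : mono) (s : nat) : Prop :=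
  (0 < omega x s)%N /\ forall i, (s < i)%N -> omega x i = 0%N.

Definition in_Pminus (x : mono) (p : P5) : Prop :=
  forall y, y \in msupp p -> mdeg y = mdeg x /\ wlt (omega y) (omega x).

Definition spike_sum (n r : nat) : Prop :=
  exists u : seq nat, size u = r /\ all (fun e => (0 < e)%N) u /\
    n = (\sum_(e <- u) (2 ^ e - 1))%N.

Definition mu_is (n s : nat) : Prop :=
  spike_sum n s /\ forall r, (r < s)%N -> ~ spike_sum n r.

(* z is the minimal spike of degree n (requires mu(n) = s <= 5);
   e i stands for e_{i+1} *)
Definition min_spike (n : nat) (z : mono) : Prop :=
  exists s, mu_is n s /\ (s <= 5)%N /\
  exists e : nat -> nat,
    (forall i, (i.+2 < s)%N -> (e i.+1 < e i)%N) /\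
    ((1 < s)%N -> (e s.-1 <= e s.-2)%N) /\
    ((0 < s)%N -> (0 < e s.-1)%N) /\
    n = (\sum_(i < s) (2 ^ e i - 1))%N /\
    (forall i : 'I_5, z i = if (i < s)%N then (2 ^ e i - 1)%N else 0%N).

Definition in_Pn (n : nat) (p : P5) : Prop :=
  forall x, x \in msupp p -> mdeg x = n /\
    exists z, min_spike n z /\
      exists h, (1 <= h)%N /\
        (\sum_(j < h) 2 ^ j * omega x j.+1 < \sum_(j < h) 2 ^ j * omega z j.+1)%N.

Definition strictly_inadmissible (x : mono) : Prop :=
  exists s, top_weight x s /\
  exists ys : seq mono, (forall y, y \in ys -> mlt y x) /\
  exists a b : P5, in_Aplus s a /\ in_Pminus x b /\
    'X_[x] + \sum_(y <- ys) 'X_[y] = a + b.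

Definition strongly_inadmissible (x : mono) : Prop :=
  exists s, top_weight x s /\
  exists ys : seq mono,
    (forall y, y \in ys -> (forall i, omega y i = omega x i) /\ mlt y x) /\
  exists a b c : P5, in_Aplus s a /\ in_Pminus x b /\ in_Pn (mdeg x) c /\
    'X_[x] + \sum_(y <- ys) 'X_[y] = a + b + c.

(* For each monomial x a relation is exhibited, found by a computer search: x is congruent,
   modulo the images of Sq^1, Sq^2 and Sq^4 (which lie in A(3)^+, and s = 4 since
   omega_4(x) > 0 with all exponents below 16) and modulo P_5^-(omega(x)), to a sum of
   monomials of the same weight vector and smaller exponent vector.  By the Cartan formula
   Sq^r x^e is the sum of the x^(e+c) over the compositions c of r into five parts for which
   every C(e_i, c_i) is odd, so each such relation is a finite computation over F_2: only the
   monomials occurring an odd number of times survive, and it remains to sort them by weight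
   and exponent vector.  The relations for (ii) happen to need no summand from P_(5,n). *)

From mathcomp Require Import all_boot all_order all_algebra.
From mathcomp Require Import mpoly zify.
Set Implicit Arguments. Unset Strict Implicit. Unset Printing Implicit Defensive.
Import GRing.Theory.

Definition odd_count (T : eqType) (s : seq T) : seq T := [seq t <- undup s | odd (count_mem t s)].

Section Char2.
Local Open Scope ring_scope.
Variable R : nzRingType.
Hypothesis pcharR2 : 2 \in [pchar R].

Lemma mulrn_odd_pchar2 (x : R) n : x *+ n = x *+ odd n.
Proof.
elim: n => // n IHn; rewrite mulrS IHn /=.
by case: (odd n) => /=; rewrite ?addrr_pchar2 ?addr0.
Qed.

Lemma big_odd_count_pchar2 (T : eqType) (F : T -> R) s :
  \sum_(t <- s) F t = \sum_(t <- odd_count s) F t.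
Proof.
rewrite -big_undup_iterop_count big_filter [RHS]big_mkcond /=.
apply: eq_bigr => t _; rewrite Monoid.iteropE iter_addr_0 mulrn_odd_pchar2.
by case: (odd _).
Qed.

Lemma addr_move_pchar2 (a b c d : R) : a + b = c + d -> c + a = d + b.
Proof.
move=> eq_ab; rewrite -[LHS]addr0 -(addrr_pchar2 pcharR2 b) addrA -(addrA c) eq_ab.
by rewrite addrA addrr_pchar2 // add0r.
Qed.

End Char2.

Lemma pchar_F2 : 2 \in [pchar 'F_2]%R.
Proof. exact: (@pchar_Fp 2). Qed.

Lemma pchar_P5 : 2 \in [pchar P5]%R.
Proof. by rewrite (pchar_lalg P5) pchar_F2. Qed.

Fixpoint comps (r n : nat) : seq (seq nat) :=
  if n is n'.+1 then [seq i :: c | i <- iota 0 r.+1, c <- comps (r - i) n']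
  else if r == 0 then [:: [::]] else [::].

Lemma mem_comps n r c : (c \in comps r n) = (size c == n) && (sumn c == r).
Proof.
elim: n r c => [|n IHn] r c; first by case: c => [|a c]; case: r.
apply/allpairsPdep/idP => [[i [c' [Hi Hc' ->]]] | ].
  rewrite mem_iota in Hi; move: Hc'; rewrite IHn /= eqSS => /andP [-> /eqP Hsum].
  by apply/eqP; lia.
case: c => [|a c] // /andP [Hs /eqP Hsum]; rewrite /= eqSS in Hs Hsum.
by exists a, c; rewrite mem_iota IHn Hs; split => //; [apply/andP; split | apply/eqP]; lia.
Qed.

Lemma comps_uniq n r : uniq (comps r n).
Proof.
elim: n r => [|n IHn] r; first by rewrite /=; case: (r == 0).
apply: allpairs_uniq_dep => [|i _|[i1 c1] [i2 c2] _ _ /= [-> ->]] //.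
exact: iota_uniq.
Qed.

Lemma nth_leq_sumn (s : seq nat) i : nth 0 s i <= sumn s.
Proof.
elim: s i => [|a s IHs] [|i] //=; first exact: leq_addr.
exact: leq_trans (IHs i) (leq_addl a _).
Qed.

Lemma sum_nth_size (s : seq nat) n : size s = n -> \sum_(i < n) nth 0 s i = sumn s.
Proof. by move=> <-; rewrite sumnE (big_nth 0) big_mkord. Qed.

Definition ffun_of_comp (n r : nat) (c : seq nat) : {ffun 'I_n -> 'I_r.+1} :=
  [ffun i : 'I_n => inord (nth 0 c i)].

Lemma ffun_of_compE n r c i : c \in comps r n -> ffun_of_comp n r c i = nth 0 c i :> nat.
Proof. by rewrite mem_comps ffunE => /andP [_ /eqP <-]; rewrite inordK // ltnS nth_leq_sumn. Qed.

Lemma perm_comps_ffun n r :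
  perm_eq [seq k : {ffun 'I_n -> 'I_r.+1} <- index_enum _ | \sum_(i < n) (k i : nat) == r]
          (map (ffun_of_comp n r) (comps r n)).
Proof.
apply: uniq_perm; first by rewrite filter_uniq // index_enum_uniq.
  rewrite map_inj_in_uniq ?comps_uniq // => c1 c2 c1_in c2_in eq_f.
  move: (c1_in) (c2_in); rewrite !mem_comps => /andP [/eqP size1 _] /andP [/eqP size2 _].
  apply: (@eq_from_nth _ 0) => [|j]; first by rewrite size1 size2.
  rewrite size1 => lt_jn; have := congr1 (fun f : {ffun 'I_n -> 'I_r.+1} => f (Ordinal lt_jn) : nat) eq_f.
  by rewrite /= !ffun_of_compE.
move=> k; rewrite mem_filter mem_index_enum andbT; apply/eqP/mapP.
  move=> sum_k; exists [seq (k i : nat) | i <- enum 'I_n].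
    by rewrite mem_comps size_map size_enum_ord sumnE big_map big_enum /= sum_k !eqxx.
  apply/ffunP => i; apply: val_inj.
  by rewrite ffunE (nth_map i) ?size_enum_ord // nth_ord_enum inord_val.
case=> c c_in ->; rewrite (eq_bigr (fun i : 'I_n => nth 0 c i)) => [|i _]; last exact: ffun_of_compE.
by move: c_in; rewrite mem_comps => /andP [/eqP /sum_nth_size -> /eqP].
Qed.

(* Binding the previous row keeps the evaluation quadratic rather than exponential. *)
Fixpoint pascal2 (a : nat) : seq bool :=
  if a is a'.+1 then
    let row := pascal2 a' in
    [seq (if k is k'.+1 then nth false row k' else false) (+) nth false row k | k <- iota 0 a.+1]
  else [:: true].

Lemma size_pascal2 a : size (pascal2 a) = a.+1.
Proof. by case: a => //= a; rewrite size_map size_iota. Qed.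

Lemma pascal2S a : pascal2 a.+1 =
  [seq (if k is k'.+1 then nth false (pascal2 a) k' else false) (+) nth false (pascal2 a) k
  | k <- iota 0 a.+2].
Proof. by []. Qed.

Lemma nth_pascal2 a k : nth false (pascal2 a) k = odd 'C(a, k).
Proof.
elim: a k => [|a IHa] k; first by case: k => [|[|k]].
have [lt|ge] := ltnP k a.+2; last by rewrite nth_default ?bin_small ?size_pascal2.
rewrite pascal2S (nth_map 0) ?size_iota // nth_iota // add0n.
by case: k {lt} => [|k]; rewrite !IHa ?bin0 // binS oddD addbC.
Qed.

Local Open Scope ring_scope.

Definition mono_of (e : seq nat) : mono := [multinom nth 0%N e i | i < 5].

Definition sum_monos (L : seq (seq nat)) : P5 := \sum_(e <- L) 'X_[mono_of e].

Definition add5 (e c : seq nat) : seq nat := [seq (nth 0 e j + nth 0 c j)%N | j <- iota 0 5].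

Definition pascal_rows (e : seq nat) : seq (seq bool) := [seq pascal2 (nth 0%N e j) | j <- iota 0 5].

Definition sq_exps (r : nat) (e : seq nat) : seq (seq nat) :=
  let rows := pascal_rows e in
  [seq add5 e c | c <- comps r 5 & all (fun j => nth false (nth [::] rows j) (nth 0%N c j)) (iota 0 5)].

Lemma sq_monoE r e : sq_mono r (mono_of e) = sum_monos (sq_exps r e).
Proof.
rewrite /sq_mono -big_filter (perm_big _ (perm_comps_ffun 5 r)) big_map.
rewrite /sq_exps /sum_monos big_map big_filter [RHS]big_mkcond big_seq [RHS]big_seq.
apply: eq_bigr => c c_in; have val_c := fun i => ffun_of_compE i c_in.
have -> : [multinom (mono_of e i + ffun_of_comp 5 r c i)%N | i < 5] = mono_of (add5 e c).
  by apply/mnmP => i; rewrite !mnmE val_c (nth_map 0%N) ?size_iota // nth_iota.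
rewrite (mulrn_odd_pchar2 pchar_F2).
have -> : odd (\prod_(i < 5) 'C(mono_of e i, ffun_of_comp 5 r c i)) =
          all (fun j => nth false (nth [::] (pascal_rows e) j) (nth 0%N c j)) (iota 0 5).
  by rewrite !big_ord_recr big_ord0 /= !oddM !mnmE !val_c !nth_pascal2 /= andbT -!andbA.
by case: all; rewrite ?scale1r ?scale0r.
Qed.

Local Close Scope ring_scope.

Definition deg5 (e : seq nat) : nat := sumn [seq nth 0 e j | j <- iota 0 5].
Definition wt5 (e : seq nat) (k : nat) : nat := sumn [seq alpha k (nth 0 e j) | j <- iota 0 5].

Lemma sum5 (F : nat -> nat) : \sum_(j < 5) F j = sumn [seq F j | j <- iota 0 5].
Proof. by rewrite !big_ord_recr big_ord0 /= !addnA addn0. Qed.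

Lemma mdeg_mono_of e : mdeg (mono_of e) = deg5 e.
Proof. by rewrite mdegE /deg5 -sum5; apply: eq_bigr => j _; rewrite mnmE. Qed.

Lemma omega_mono_of e k : omega (mono_of e) k.+1 = wt5 e k.
Proof. by rewrite /omega /wt5 -sum5; apply: eq_bigr => j _; rewrite mnmE. Qed.

Definition exps_lt (k : nat) (e : seq nat) : bool := all (fun j => nth 0 e j < 2 ^ k) (iota 0 5).

Lemma wt5_eq0 k m e : exps_lt k e -> k <= m -> wt5 e m = 0.
Proof.
move=> /allP He km; rewrite /wt5 /=.
have digit0 j : j \in iota 0 5 -> alpha m (nth 0 e j) = 0.
  move=> /He ltk; rewrite /alpha divn_small //.
  by apply: leq_trans ltk _; rewrite leq_exp2l.
by rewrite !digit0.
Qed.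

Definition wltb (e f : seq nat) : bool :=
  has (fun k => (wt5 e k < wt5 f k) && all (fun j => wt5 e j == wt5 f j) (iota 0 k)) (iota 0 6).

Lemma wltbP e f : wltb e f -> wlt (omega (mono_of e)) (omega (mono_of f)).
Proof.
case/hasP => k _ /andP [lt_k /allP eq_lt_k].
exists k.+1; rewrite !omega_mono_of; split=> //; split=> // [[|j]] // /andP [_ lt_jk].
by rewrite !omega_mono_of; apply/eqP/eq_lt_k; rewrite mem_iota.
Qed.

Definition eq_weightb (e f : seq nat) : bool :=
  [&& all (fun k => wt5 e k == wt5 f k) (iota 0 6), exps_lt 6 e & exps_lt 6 f].

Lemma eq_weightbP e f : eq_weightb e f -> forall k, omega (mono_of e) k = omega (mono_of f) k.
Proof.
case/and3P => /allP eq_lt6 e_lt f_lt [|k] //; rewrite !omega_mono_of.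
have [lt6|ge6] := ltnP k 6; first by apply/eqP/eq_lt6; rewrite mem_iota.
by rewrite (wt5_eq0 e_lt) ?(wt5_eq0 f_lt).
Qed.

Definition sltb (e f : seq nat) : bool :=
  has (fun i => (nth 0 e i < nth 0 f i) && all (fun j => nth 0 e j == nth 0 f j) (iota 0 i))
      (iota 0 5).

Lemma sltbP e f : sltb e f -> slt (mono_of e) (mono_of f).
Proof.
case/hasP => i; rewrite mem_iota => /andP [_ lt_i5] /andP [lt_i /allP eq_lt_i].
exists (Ordinal lt_i5); split=> [j lt_ji|]; rewrite !mnmE //.
by apply/eqP/eq_lt_i; rewrite mem_iota.
Qed.

Definition top_weight4b (e : seq nat) : bool := (0 < wt5 e 3) && exps_lt 4 e.

Lemma top_weight4bP e : top_weight4b e -> top_weight (mono_of e) 4.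
Proof.
case/andP => pos3 e_lt; split; first by rewrite omega_mono_of.
by case=> [|k] // lt4k; rewrite omega_mono_of (wt5_eq0 e_lt).
Qed.

Definition sq_terms (cert : seq (nat * seq nat)) : seq (seq nat) :=
  flatten [seq sq_exps c.1 c.2 | c <- cert].

(* A certificate lists pairs (r, e) standing for Sq^r x^e. *)
Definition certifies (x : seq nat) (cert : seq (nat * seq nat)) : bool :=
  [&& top_weight4b x, all (fun c => 0 < c.1 < 2 ^ 4) cert &
      all (fun e => (deg5 e == deg5 x) && (wltb e x || eq_weightb e x && sltb e x))
          (odd_count (x :: sq_terms cert))].

Local Open Scope ring_scope.

Lemma Sq_X r m : Sq r 'X_[m] = sq_mono r m.
Proof. by rewrite /Sq msuppX big_seq1 mcoeffX eqxx scale1r. Qed.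

Lemma sum_filterC (V : nmodType) (T : Type) (p : pred T) (F : T -> V) s :
  \sum_(t <- s) F t = \sum_(t <- [seq t <- s | ~~ p t]) F t + \sum_(t <- [seq t <- s | p t]) F t.
Proof. by rewrite !big_filter (bigID p) addrC. Qed.

Lemma in_Aplus_sq_terms s cert :
  all (fun c => (0 < c.1 < 2 ^ s)%N) cert -> in_Aplus s (sum_monos (sq_terms cert)).
Proof.
move=> cert_s; exists [seq ([:: c.1], 'X_[mono_of c.2]) | c <- cert]; split.
  by rewrite all_map; apply: sub_all cert_s => c /= ->.
rewrite big_map; elim: cert {cert_s} => [|c cert IHcert]; first by rewrite /sum_monos !big_nil.
by rewrite big_cons /= Sq_X sq_monoE -IHcert; exact: big_cat.
Qed.

Lemma certifies_relation x cert : certifies x cert ->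
  exists2 ys : seq mono,
    (forall y, y \in ys -> (forall i, omega y i = omega (mono_of x) i) /\ mlt y (mono_of x)) &
    exists a b, [/\ in_Aplus 4 a, in_Pminus (mono_of x) b &
                    'X_[mono_of x] + \sum_(y <- ys) 'X_[y] = a + b].
Proof.
case/and3P => _ cert_lt; set N := odd_count _ => /allP N_ok.
exists [seq mono_of e | e <- N & ~~ wltb e x].
  move=> y /mapP [e]; rewrite mem_filter => /andP [/negbTE not_lt /N_ok] + ->.
  rewrite not_lt /= => /and3P [/eqP deg_ex eq_ex lt_ex].
  split; first exact: eq_weightbP.
  by rewrite /mlt !mdeg_mono_of; split=> //; right; split; [exact: eq_weightbP | exact: sltbP].
exists (sum_monos (sq_terms cert)), (sum_monos [seq e <- N | wltb e x]); split.
- exact: in_Aplus_sq_terms.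
- move=> y /msupp_sum_le /flattenP [s /mapP [e]].
  rewrite mem_filter /= mem_filter => /andP [lt_ex /N_ok /andP [/eqP deg_ex _]] -> {s}.
  rewrite msuppX inE => /eqP ->.
  by rewrite !mdeg_mono_of; split; last exact: wltbP.
have sum_N : sum_monos N = 'X_[mono_of x] + sum_monos (sq_terms cert).
  by rewrite /sum_monos /N -(big_odd_count_pchar2 pchar_P5) big_cons.
rewrite big_map; apply: (addr_move_pchar2 pchar_P5); rewrite -sum_N.
exact/esym/sum_filterC.
Qed.

Lemma certifies_strictly_inadmissible x cert :
  certifies x cert -> strictly_inadmissible (mono_of x).
Proof.
move=> cert_x; exists 4; split; first by case/and3P: cert_x => /top_weight4bP.
have [ys ys_lt [a [b [Aa Pb rel]]]] := certifies_relation cert_x.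
by exists ys; split=> [y /ys_lt []|]; last by exists a, b.
Qed.

Lemma certifies_strongly_inadmissible x cert :
  certifies x cert -> strongly_inadmissible (mono_of x).
Proof.
move=> cert_x; exists 4; split; first by case/and3P: cert_x => /top_weight4bP.
have [ys ys_lt [a [b [Aa Pb rel]]]] := certifies_relation cert_x.
exists ys; split=> //; exists a, b, 0; split=> //; split=> //; split=> [y|].
  by rewrite msupp0.
by rewrite addr0.
Qed.

Local Close Scope ring_scope.
Definition strict_certs : seq (seq nat * seq (nat * seq nat)) := [::
  ([:: 3; 5; 9; 14; 14],
    [:: (1, [:: 3; 3; 7; 13; 18]); (1, [:: 3; 3; 7; 17; 14]); (1, [:: 3; 3; 11; 13; 14]);
        (2, [:: 2; 3; 11; 13; 14]); (2, [:: 3; 3; 9; 14; 14]); (2, [:: 3; 5; 7; 14; 14]);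
        (4, [:: 3; 3; 7; 14; 14])]);
  ([:: 3; 5; 14; 9; 14],
    [:: (1, [:: 3; 3; 13; 7; 18]); (1, [:: 3; 3; 13; 11; 14]); (1, [:: 3; 3; 17; 7; 14]);
        (2, [:: 2; 3; 13; 11; 14]); (2, [:: 3; 3; 14; 9; 14]); (2, [:: 3; 5; 14; 7; 14]);
        (4, [:: 3; 3; 14; 7; 14])]);
  ([:: 3; 7; 11; 12; 12],
    [:: (1, [:: 3; 7; 3; 13; 18]); (1, [:: 3; 7; 3; 17; 14]); (1, [:: 3; 7; 9; 7; 18]);
        (1, [:: 3; 7; 9; 11; 14]); (1, [:: 3; 7; 11; 12; 11]); (1, [:: 3; 7; 12; 9; 13]);
        (1, [:: 3; 11; 3; 13; 14]); (1, [:: 3; 11; 9; 7; 14]); (1, [:: 5; 7; 9; 10; 13]);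
        (1, [:: 5; 7; 9; 12; 11]); (1, [:: 5; 9; 3; 13; 14]); (1, [:: 5; 9; 5; 11; 14]);
        (2, [:: 2; 7; 9; 11; 14]); (2, [:: 2; 7; 11; 12; 11]); (2, [:: 2; 11; 3; 13; 14]);
        (2, [:: 2; 11; 9; 7; 14]); (2, [:: 3; 7; 5; 14; 14]); (2, [:: 3; 7; 9; 10; 14]);
        (2, [:: 3; 7; 10; 9; 14]); (2, [:: 3; 7; 10; 10; 13]); (2, [:: 3; 7; 10; 12; 11]);
        (2, [:: 3; 7; 12; 7; 14]); (2, [:: 3; 9; 6; 11; 14]); (2, [:: 3; 9; 10; 7; 14]);
        (2, [:: 3; 10; 3; 13; 14]); (2, [:: 3; 10; 5; 11; 14]); (2, [:: 6; 7; 9; 10; 11]);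
        (2, [:: 6; 9; 3; 11; 14]); (4, [:: 3; 5; 6; 13; 14]); (4, [:: 3; 5; 12; 7; 14]);
        (4, [:: 3; 7; 3; 14; 14]); (4, [:: 3; 7; 4; 13; 14]); (4, [:: 3; 7; 10; 7; 14]);
        (4, [:: 3; 12; 5; 7; 14])]);
  ([:: 3; 7; 13; 8; 14],
    [:: (1, [:: 3; 7; 7; 9; 18]); (1, [:: 3; 7; 11; 5; 18]); (1, [:: 3; 11; 7; 9; 14]);
        (1, [:: 3; 11; 11; 5; 14]); (2, [:: 2; 11; 7; 9; 14]); (2, [:: 2; 11; 11; 5; 14]);
        (2, [:: 3; 7; 7; 12; 14]); (2, [:: 3; 7; 9; 10; 14]); (2, [:: 3; 7; 11; 8; 14]);
        (2, [:: 3; 7; 13; 6; 14]); (2, [:: 3; 9; 7; 10; 14]); (2, [:: 3; 9; 11; 6; 14]);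
        (4, [:: 3; 5; 7; 12; 14]); (4, [:: 3; 5; 13; 6; 14]); (4, [:: 3; 7; 7; 10; 14]);
        (4, [:: 3; 7; 11; 6; 14]); (4, [:: 3; 7; 12; 5; 14]); (4, [:: 3; 12; 7; 5; 14])]);
  ([:: 3; 7; 13; 14; 8],
    [:: (1, [:: 3; 7; 7; 9; 18]); (1, [:: 3; 7; 11; 9; 14]); (1, [:: 3; 7; 11; 13; 10]);
        (1, [:: 3; 7; 11; 17; 6]); (1, [:: 3; 11; 7; 9; 14]); (1, [:: 3; 11; 7; 11; 12]);
        (1, [:: 3; 11; 7; 12; 11]); (1, [:: 3; 11; 11; 13; 6]); (1, [:: 3; 12; 7; 9; 13]);
        (1, [:: 5; 9; 7; 10; 13]); (1, [:: 5; 9; 7; 11; 12]); (1, [:: 5; 9; 7; 12; 11]);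
        (1, [:: 5; 9; 7; 13; 10]); (2, [:: 2; 7; 11; 9; 14]); (2, [:: 2; 7; 11; 13; 10]);
        (2, [:: 2; 11; 7; 9; 14]); (2, [:: 2; 11; 7; 11; 12]); (2, [:: 2; 11; 7; 12; 11]);
        (2, [:: 2; 11; 11; 13; 6]); (2, [:: 3; 7; 7; 12; 14]); (2, [:: 3; 7; 9; 10; 14]);
        (2, [:: 3; 7; 11; 14; 8]); (2, [:: 3; 7; 13; 14; 6]); (2, [:: 3; 9; 7; 14; 10]);
        (2, [:: 3; 9; 11; 14; 6]); (2, [:: 3; 10; 7; 10; 13]); (2, [:: 3; 10; 7; 11; 12]);
        (2, [:: 3; 10; 7; 12; 11]); (2, [:: 3; 10; 7; 13; 10]); (2, [:: 6; 9; 7; 10; 11]);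
        (2, [:: 6; 9; 7; 11; 10]); (4, [:: 3; 5; 7; 14; 12]); (4, [:: 3; 5; 13; 14; 6]);
        (4, [:: 3; 7; 7; 10; 14]); (4, [:: 3; 7; 11; 14; 6]); (4, [:: 3; 7; 12; 13; 6]);
        (4, [:: 3; 12; 7; 13; 6])]);
  ([:: 3; 12; 3; 13; 14],
    [:: (1, [:: 3; 7; 3; 13; 18]); (1, [:: 3; 7; 3; 17; 14]); (1, [:: 3; 11; 3; 13; 14]);
        (2, [:: 2; 11; 3; 13; 14]); (2, [:: 3; 7; 5; 14; 14]); (2, [:: 3; 9; 3; 14; 14]);
        (4, [:: 3; 7; 3; 14; 14])]);
  ([:: 7; 3; 11; 12; 12],
    [:: (1, [:: 7; 3; 3; 13; 18]); (1, [:: 7; 3; 3; 17; 14]); (1, [:: 7; 3; 7; 9; 18]);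
        (1, [:: 7; 3; 11; 9; 14]); (1, [:: 7; 3; 11; 12; 11]); (1, [:: 7; 3; 12; 9; 13]);
        (1, [:: 7; 5; 9; 10; 13]); (1, [:: 7; 5; 9; 12; 11]); (1, [:: 9; 3; 5; 13; 14]);
        (1, [:: 9; 5; 3; 13; 14]); (1, [:: 9; 5; 7; 9; 14]); (1, [:: 11; 1; 5; 13; 14]);
        (1, [:: 11; 3; 3; 13; 14]); (1, [:: 11; 3; 7; 9; 14]); (1, [:: 13; 1; 3; 13; 14]);
        (1, [:: 13; 1; 5; 11; 14]); (1, [:: 13; 1; 7; 9; 14]); (1, [:: 13; 1; 9; 7; 14]);
        (2, [:: 7; 2; 11; 9; 14]); (2, [:: 7; 2; 11; 12; 11]); (2, [:: 7; 3; 5; 14; 14]);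
        (2, [:: 7; 3; 7; 12; 14]); (2, [:: 7; 3; 10; 10; 13]); (2, [:: 7; 3; 10; 12; 11]);
        (2, [:: 7; 6; 9; 10; 11]); (2, [:: 10; 3; 3; 13; 14]); (2, [:: 10; 3; 7; 9; 14]);
        (2, [:: 11; 1; 3; 14; 14]); (2, [:: 11; 1; 6; 11; 14]); (2, [:: 11; 1; 7; 10; 14]);
        (2, [:: 11; 1; 10; 7; 14]); (2, [:: 11; 2; 3; 13; 14]); (2, [:: 11; 2; 7; 9; 14]);
        (2, [:: 14; 1; 3; 11; 14]); (2, [:: 14; 1; 7; 7; 14]); (4, [:: 5; 3; 5; 14; 14]);
        (4, [:: 5; 3; 6; 13; 14]); (4, [:: 5; 6; 3; 13; 14]); (4, [:: 5; 6; 7; 9; 14]);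
        (4, [:: 7; 1; 7; 12; 14]); (4, [:: 7; 1; 12; 7; 14]); (4, [:: 7; 3; 3; 14; 14]);
        (4, [:: 7; 3; 4; 13; 14]); (4, [:: 7; 3; 7; 10; 14]); (4, [:: 13; 2; 5; 7; 14])]);
  ([:: 7; 3; 13; 8; 14],
    [:: (1, [:: 7; 3; 7; 9; 18]); (1, [:: 7; 3; 11; 5; 18]); (1, [:: 9; 3; 13; 5; 14]);
        (1, [:: 9; 5; 7; 9; 14]); (1, [:: 9; 5; 11; 5; 14]); (1, [:: 11; 1; 13; 5; 14]);
        (1, [:: 11; 3; 7; 9; 14]); (1, [:: 11; 3; 11; 5; 14]); (2, [:: 7; 3; 7; 12; 14]);
        (2, [:: 7; 3; 9; 10; 14]); (2, [:: 7; 3; 11; 8; 14]); (2, [:: 7; 3; 13; 6; 14]);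
        (2, [:: 10; 3; 7; 9; 14]); (2, [:: 10; 3; 11; 5; 14]); (2, [:: 11; 2; 7; 9; 14]);
        (2, [:: 11; 2; 11; 5; 14]); (4, [:: 5; 3; 13; 6; 14]); (4, [:: 5; 3; 14; 5; 14]);
        (4, [:: 5; 6; 7; 9; 14]); (4, [:: 5; 6; 11; 5; 14]); (4, [:: 7; 1; 13; 6; 14]);
        (4, [:: 7; 1; 14; 5; 14]); (4, [:: 7; 3; 7; 10; 14]); (4, [:: 7; 3; 11; 6; 14]);
        (4, [:: 7; 3; 12; 5; 14]); (4, [:: 13; 2; 7; 5; 14])]);
  ([:: 7; 3; 13; 14; 8],
    [:: (1, [:: 7; 3; 7; 9; 18]); (1, [:: 7; 3; 11; 9; 14]); (1, [:: 7; 3; 11; 13; 10]);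
        (1, [:: 7; 3; 11; 17; 6]); (1, [:: 7; 5; 7; 12; 13]); (1, [:: 7; 5; 7; 13; 12]);
        (1, [:: 7; 5; 9; 11; 12]); (1, [:: 7; 5; 9; 12; 11]); (1, [:: 7; 8; 7; 11; 11]);
        (1, [:: 9; 3; 7; 12; 13]); (1, [:: 9; 3; 7; 13; 12]); (1, [:: 9; 3; 13; 13; 6]);
        (1, [:: 9; 5; 7; 9; 14]); (1, [:: 9; 5; 7; 11; 12]); (1, [:: 9; 5; 7; 12; 11]);
        (1, [:: 9; 5; 11; 13; 6]); (1, [:: 11; 1; 7; 13; 12]); (1, [:: 11; 1; 13; 13; 6]);
        (1, [:: 11; 3; 7; 9; 14]); (1, [:: 11; 3; 7; 11; 12]); (1, [:: 11; 3; 7; 12; 11]);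
        (1, [:: 11; 3; 11; 13; 6]); (1, [:: 11; 4; 7; 9; 13]); (1, [:: 13; 1; 7; 10; 13]);
        (1, [:: 13; 1; 7; 11; 12]); (1, [:: 13; 1; 7; 12; 11]); (1, [:: 13; 1; 7; 13; 10]);
        (2, [:: 7; 2; 11; 9; 14]); (2, [:: 7; 2; 11; 13; 10]); (2, [:: 7; 3; 7; 14; 12]);
        (2, [:: 7; 3; 9; 10; 14]); (2, [:: 7; 3; 10; 11; 12]); (2, [:: 7; 3; 10; 12; 11]);
        (2, [:: 7; 3; 11; 14; 8]); (2, [:: 7; 3; 13; 14; 6]); (2, [:: 7; 6; 7; 11; 12]);
        (2, [:: 7; 6; 7; 12; 11]); (2, [:: 10; 3; 7; 9; 14]); (2, [:: 10; 3; 7; 11; 12]);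
        (2, [:: 10; 3; 7; 12; 11]); (2, [:: 10; 3; 11; 13; 6]); (2, [:: 11; 1; 7; 10; 14]);
        (2, [:: 11; 1; 7; 14; 10]); (2, [:: 11; 2; 7; 10; 13]); (2, [:: 11; 2; 7; 11; 12]);
        (2, [:: 11; 2; 7; 12; 11]); (2, [:: 11; 2; 11; 13; 6]); (2, [:: 14; 1; 7; 10; 11]);
        (2, [:: 14; 1; 7; 11; 10]); (4, [:: 5; 3; 13; 14; 6]); (4, [:: 5; 3; 14; 13; 6]);
        (4, [:: 5; 6; 7; 9; 14]); (4, [:: 5; 6; 11; 13; 6]); (4, [:: 7; 1; 7; 12; 14]);
        (4, [:: 7; 1; 13; 14; 6]); (4, [:: 7; 1; 14; 13; 6]); (4, [:: 7; 3; 7; 10; 14]);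
        (4, [:: 7; 3; 11; 14; 6]); (4, [:: 7; 3; 12; 13; 6]); (4, [:: 13; 2; 7; 13; 6])]);
  ([:: 7; 7; 9; 14; 8],
    [:: (1, [:: 5; 7; 13; 7; 12]); (1, [:: 7; 3; 7; 9; 18]); (1, [:: 7; 3; 11; 9; 14]);
        (1, [:: 7; 5; 12; 7; 13]); (1, [:: 7; 7; 9; 8; 13]); (1, [:: 7; 7; 9; 9; 12]);
        (1, [:: 7; 7; 11; 7; 12]); (1, [:: 7; 7; 11; 8; 11]); (1, [:: 7; 8; 11; 7; 11]);
        (1, [:: 7; 9; 1; 13; 14]); (1, [:: 7; 9; 2; 13; 13]); (1, [:: 7; 9; 3; 13; 12]);
        (1, [:: 7; 9; 4; 13; 11]); (1, [:: 7; 9; 5; 9; 14]); (1, [:: 7; 9; 5; 10; 13]);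
        (1, [:: 7; 9; 5; 11; 12]); (1, [:: 7; 9; 5; 12; 11]); (1, [:: 7; 11; 1; 11; 14]);
        (1, [:: 7; 11; 1; 12; 13]); (1, [:: 7; 11; 2; 11; 13]); (1, [:: 7; 11; 3; 9; 14]);
        (1, [:: 7; 11; 3; 10; 13]); (1, [:: 7; 11; 3; 11; 12]); (1, [:: 7; 11; 3; 12; 11]);
        (1, [:: 7; 11; 4; 9; 13]); (1, [:: 7; 11; 4; 11; 11]); (1, [:: 9; 3; 12; 7; 13]);
        (1, [:: 9; 5; 7; 9; 14]); (1, [:: 9; 5; 12; 7; 11]); (1, [:: 11; 3; 7; 9; 14]);
        (1, [:: 11; 3; 12; 7; 11]); (1, [:: 11; 4; 9; 7; 13]); (1, [:: 11; 5; 3; 13; 12]);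
        (1, [:: 11; 5; 5; 13; 10]); (1, [:: 13; 1; 7; 9; 14]); (1, [:: 13; 1; 9; 7; 14]);
        (1, [:: 13; 1; 10; 7; 13]); (1, [:: 13; 1; 12; 7; 11]); (1, [:: 13; 3; 3; 13; 12]);
        (1, [:: 13; 3; 5; 13; 10]); (1, [:: 13; 5; 3; 13; 10]); (2, [:: 3; 7; 14; 7; 12]);
        (2, [:: 6; 7; 11; 7; 12]); (2, [:: 7; 3; 7; 12; 14]); (2, [:: 7; 3; 12; 7; 14]);
        (2, [:: 7; 6; 12; 7; 11]); (2, [:: 7; 7; 1; 14; 14]); (2, [:: 7; 7; 6; 9; 14]);
        (2, [:: 7; 7; 9; 14; 6]); (2, [:: 7; 7; 10; 7; 12]); (2, [:: 7; 7; 10; 8; 11]);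
        (2, [:: 7; 9; 2; 14; 11]); (2, [:: 7; 9; 6; 10; 11]); (2, [:: 7; 10; 1; 11; 14]);
        (2, [:: 7; 10; 2; 11; 13]); (2, [:: 7; 10; 3; 9; 14]); (2, [:: 7; 10; 3; 10; 13]);
        (2, [:: 7; 10; 3; 11; 12]); (2, [:: 7; 10; 3; 12; 11]); (2, [:: 7; 10; 4; 11; 11]);
        (2, [:: 10; 3; 7; 9; 14]); (2, [:: 10; 3; 12; 7; 11]); (2, [:: 11; 1; 7; 10; 14]);
        (2, [:: 11; 2; 7; 9; 14]); (2, [:: 11; 2; 9; 7; 14]); (2, [:: 11; 2; 10; 7; 13]);
        (2, [:: 11; 2; 12; 7; 11]); (2, [:: 11; 3; 3; 14; 12]); (2, [:: 11; 3; 6; 11; 12]);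
        (2, [:: 11; 3; 6; 13; 10]); (2, [:: 11; 3; 9; 14; 6]); (2, [:: 11; 3; 10; 7; 12]);
        (2, [:: 11; 5; 3; 14; 10]); (2, [:: 11; 6; 3; 13; 10]); (2, [:: 14; 1; 7; 7; 14]);
        (2, [:: 14; 1; 10; 7; 11]); (2, [:: 14; 3; 3; 13; 10]); (4, [:: 5; 6; 7; 9; 14]);
        (4, [:: 5; 7; 1; 14; 14]); (4, [:: 5; 7; 6; 9; 14]); (4, [:: 5; 7; 9; 14; 6]);
        (4, [:: 5; 7; 10; 7; 12]); (4, [:: 7; 1; 7; 12; 14]); (4, [:: 7; 3; 5; 14; 12]);
        (4, [:: 7; 3; 7; 10; 14]); (4, [:: 7; 5; 3; 14; 12]); (4, [:: 7; 5; 6; 11; 12]);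
        (4, [:: 7; 5; 9; 14; 6]); (4, [:: 7; 5; 10; 7; 12]); (4, [:: 13; 3; 5; 14; 6]);
        (4, [:: 13; 3; 6; 7; 12])]);
  ([:: 7; 9; 7; 10; 12],
    [:: (1, [:: 5; 7; 7; 13; 12]); (1, [:: 7; 7; 7; 11; 12]); (2, [:: 3; 7; 7; 14; 12]);
        (2, [:: 6; 7; 7; 11; 12]); (2, [:: 7; 7; 7; 10; 12]); (4, [:: 5; 7; 7; 10; 12])]);
  ([:: 7; 11; 3; 12; 12],
    [:: (1, [:: 7; 11; 3; 12; 11]); (1, [:: 7; 11; 4; 9; 13]); (1, [:: 7; 13; 1; 9; 14]);
        (1, [:: 7; 13; 1; 10; 13]); (1, [:: 7; 13; 1; 12; 11]); (2, [:: 7; 10; 3; 12; 11]);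
        (2, [:: 7; 11; 2; 9; 14]); (2, [:: 7; 11; 2; 10; 13]); (2, [:: 7; 11; 2; 12; 11]);
        (2, [:: 7; 14; 1; 7; 14]); (2, [:: 7; 14; 1; 10; 11]); (4, [:: 5; 14; 1; 7; 14])]);
  ([:: 7; 11; 5; 8; 14],
    [:: (1, [:: 5; 7; 13; 5; 14]); (1, [:: 5; 13; 7; 5; 14]); (1, [:: 7; 7; 3; 9; 18]);
        (1, [:: 7; 7; 7; 5; 18]); (1, [:: 7; 7; 7; 9; 14]); (1, [:: 7; 7; 11; 5; 14]);
        (1, [:: 7; 11; 3; 5; 18]); (1, [:: 7; 11; 7; 5; 14]); (1, [:: 7; 13; 5; 5; 14]);
        (1, [:: 9; 7; 5; 9; 14]); (1, [:: 9; 7; 9; 5; 14]); (1, [:: 9; 9; 7; 5; 14]);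
        (1, [:: 9; 11; 5; 5; 14]); (1, [:: 9; 13; 3; 5; 14]); (1, [:: 11; 5; 9; 5; 14]);
        (1, [:: 11; 7; 3; 9; 14]); (1, [:: 11; 7; 7; 5; 14]); (1, [:: 11; 9; 5; 5; 14]);
        (1, [:: 11; 11; 3; 5; 14]); (1, [:: 13; 3; 9; 5; 14]); (1, [:: 13; 5; 7; 5; 14]);
        (1, [:: 13; 7; 5; 5; 14]); (1, [:: 13; 9; 3; 5; 14]); (2, [:: 3; 7; 13; 6; 14]);
        (2, [:: 3; 7; 14; 5; 14]); (2, [:: 3; 13; 7; 6; 14]); (2, [:: 3; 14; 7; 5; 14]);
        (2, [:: 6; 7; 7; 9; 14]); (2, [:: 6; 7; 11; 5; 14]); (2, [:: 6; 11; 7; 5; 14]);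
        (2, [:: 7; 7; 3; 12; 14]); (2, [:: 7; 7; 6; 9; 14]); (2, [:: 7; 7; 7; 8; 14]);
        (2, [:: 7; 7; 10; 5; 14]); (2, [:: 7; 10; 7; 5; 14]); (2, [:: 7; 11; 2; 9; 14]);
        (2, [:: 7; 11; 3; 8; 14]); (2, [:: 7; 11; 6; 5; 14]); (2, [:: 7; 14; 3; 5; 14]);
        (2, [:: 10; 7; 3; 9; 14]); (2, [:: 10; 7; 7; 5; 14]); (2, [:: 10; 11; 3; 5; 14]);
        (2, [:: 11; 3; 9; 6; 14]); (2, [:: 11; 3; 10; 5; 14]); (2, [:: 11; 5; 7; 6; 14]);
        (2, [:: 11; 6; 7; 5; 14]); (2, [:: 11; 7; 2; 9; 14]); (2, [:: 11; 7; 5; 6; 14]);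
        (2, [:: 11; 7; 6; 5; 14]); (2, [:: 11; 9; 3; 6; 14]); (2, [:: 11; 10; 3; 5; 14]);
        (2, [:: 11; 11; 2; 5; 14]); (2, [:: 14; 3; 7; 5; 14]); (2, [:: 14; 7; 3; 5; 14]);
        (4, [:: 7; 3; 12; 5; 14]); (4, [:: 7; 5; 7; 8; 14]); (4, [:: 7; 5; 9; 6; 14]);
        (4, [:: 7; 7; 3; 10; 14]); (4, [:: 7; 7; 5; 8; 14]); (4, [:: 7; 7; 7; 6; 14]);
        (4, [:: 7; 9; 5; 6; 14]); (4, [:: 7; 11; 3; 6; 14]); (4, [:: 7; 13; 2; 5; 14]);
        (4, [:: 13; 7; 2; 5; 14])]);
  ([:: 7; 11; 5; 14; 8],
    [:: (1, [:: 5; 7; 7; 13; 12]); (1, [:: 5; 7; 13; 13; 6]); (1, [:: 5; 13; 7; 13; 6]);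
        (1, [:: 7; 7; 3; 9; 18]); (1, [:: 7; 7; 5; 12; 13]); (1, [:: 7; 7; 5; 13; 12]);
        (1, [:: 7; 7; 7; 13; 10]); (1, [:: 7; 7; 7; 17; 6]); (1, [:: 7; 7; 11; 13; 6]);
        (1, [:: 7; 11; 3; 9; 14]); (1, [:: 7; 11; 3; 13; 10]); (1, [:: 7; 11; 3; 17; 6]);
        (1, [:: 7; 11; 5; 13; 8]); (1, [:: 7; 11; 7; 13; 6]); (1, [:: 7; 13; 3; 13; 8]);
        (1, [:: 7; 13; 5; 13; 6]); (1, [:: 9; 7; 3; 12; 13]); (1, [:: 9; 7; 3; 13; 12]);
        (1, [:: 9; 7; 5; 9; 14]); (1, [:: 9; 7; 5; 11; 12]); (1, [:: 9; 7; 5; 12; 11]);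
        (1, [:: 9; 7; 7; 13; 8]); (1, [:: 9; 7; 9; 13; 6]); (1, [:: 9; 9; 7; 13; 6]);
        (1, [:: 9; 11; 5; 13; 6]); (1, [:: 9; 13; 3; 13; 6]); (1, [:: 11; 5; 7; 13; 8]);
        (1, [:: 11; 5; 9; 13; 6]); (1, [:: 11; 7; 1; 13; 12]); (1, [:: 11; 7; 3; 9; 14]);
        (1, [:: 11; 7; 3; 11; 12]); (1, [:: 11; 7; 3; 12; 11]); (1, [:: 11; 7; 4; 9; 13]);
        (1, [:: 11; 7; 5; 13; 8]); (1, [:: 11; 7; 7; 13; 6]); (1, [:: 11; 9; 5; 13; 6]);
        (1, [:: 11; 11; 3; 13; 6]); (1, [:: 13; 3; 7; 13; 8]); (1, [:: 13; 3; 9; 13; 6]);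
        (1, [:: 13; 5; 7; 13; 6]); (1, [:: 13; 7; 1; 10; 13]); (1, [:: 13; 7; 1; 11; 12]);
        (1, [:: 13; 7; 1; 12; 11]); (1, [:: 13; 7; 1; 13; 10]); (1, [:: 13; 7; 3; 13; 8]);
        (1, [:: 13; 7; 5; 13; 6]); (1, [:: 13; 9; 3; 13; 6]); (2, [:: 3; 7; 7; 14; 12]);
        (2, [:: 3; 7; 13; 14; 6]); (2, [:: 3; 7; 14; 13; 6]); (2, [:: 3; 13; 7; 14; 6]);
        (2, [:: 3; 14; 7; 13; 6]); (2, [:: 6; 7; 7; 13; 10]); (2, [:: 6; 7; 11; 13; 6]);
        (2, [:: 6; 11; 7; 13; 6]); (2, [:: 7; 7; 3; 14; 12]); (2, [:: 7; 7; 6; 9; 14]);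
        (2, [:: 7; 7; 6; 11; 12]); (2, [:: 7; 7; 6; 12; 11]); (2, [:: 7; 7; 10; 13; 6]);
        (2, [:: 7; 10; 3; 9; 14]); (2, [:: 7; 10; 3; 13; 10]); (2, [:: 7; 10; 7; 13; 6]);
        (2, [:: 7; 11; 2; 13; 10]); (2, [:: 7; 11; 6; 13; 6]); (2, [:: 7; 14; 3; 13; 6]);
        (2, [:: 10; 7; 3; 9; 14]); (2, [:: 10; 7; 3; 11; 12]); (2, [:: 10; 7; 3; 12; 11]);
        (2, [:: 10; 7; 7; 13; 6]); (2, [:: 10; 11; 3; 13; 6]); (2, [:: 11; 3; 7; 14; 8]);
        (2, [:: 11; 3; 9; 14; 6]); (2, [:: 11; 3; 10; 13; 6]); (2, [:: 11; 5; 7; 14; 6]);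
        (2, [:: 11; 6; 7; 13; 6]); (2, [:: 11; 7; 1; 10; 14]); (2, [:: 11; 7; 1; 14; 10]);
        (2, [:: 11; 7; 2; 10; 13]); (2, [:: 11; 7; 2; 11; 12]); (2, [:: 11; 7; 2; 12; 11]);
        (2, [:: 11; 7; 3; 14; 8]); (2, [:: 11; 7; 5; 14; 6]); (2, [:: 11; 7; 6; 13; 6]);
        (2, [:: 11; 9; 3; 14; 6]); (2, [:: 11; 10; 3; 13; 6]); (2, [:: 11; 11; 2; 13; 6]);
        (2, [:: 14; 3; 7; 13; 6]); (2, [:: 14; 7; 1; 10; 11]); (2, [:: 14; 7; 1; 11; 10]);
        (2, [:: 14; 7; 3; 13; 6]); (4, [:: 7; 3; 12; 13; 6]); (4, [:: 7; 5; 7; 14; 8]);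
        (4, [:: 7; 5; 9; 14; 6]); (4, [:: 7; 7; 1; 12; 14]); (4, [:: 7; 7; 3; 10; 14]);
        (4, [:: 7; 7; 5; 14; 8]); (4, [:: 7; 7; 7; 14; 6]); (4, [:: 7; 9; 5; 14; 6]);
        (4, [:: 7; 11; 3; 14; 6]); (4, [:: 7; 13; 2; 13; 6]); (4, [:: 13; 7; 2; 13; 6])]);
  ([:: 7; 11; 13; 6; 8],
    [:: (1, [:: 7; 11; 13; 5; 8]); (1, [:: 7; 13; 11; 5; 8]); (1, [:: 7; 13; 13; 5; 6]);
        (1, [:: 11; 7; 13; 1; 12]); (1, [:: 13; 7; 11; 1; 12]); (1, [:: 13; 7; 13; 1; 10]);
        (2, [:: 7; 11; 11; 4; 10]); (2, [:: 7; 11; 11; 6; 8]); (2, [:: 7; 11; 11; 8; 6]);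
        (2, [:: 7; 11; 13; 6; 6]); (2, [:: 7; 11; 14; 5; 6]); (2, [:: 7; 14; 11; 5; 6]);
        (2, [:: 11; 7; 11; 2; 12]); (2, [:: 11; 7; 11; 4; 10]); (2, [:: 11; 7; 11; 8; 6]);
        (2, [:: 11; 7; 13; 2; 10]); (2, [:: 11; 7; 14; 1; 10]); (2, [:: 11; 11; 11; 4; 6]);
        (2, [:: 14; 7; 11; 1; 10]); (4, [:: 5; 11; 13; 6; 6]); (4, [:: 5; 11; 14; 5; 6]);
        (4, [:: 5; 14; 11; 5; 6]); (4, [:: 7; 7; 13; 2; 12]); (4, [:: 7; 7; 13; 8; 6]);
        (4, [:: 7; 11; 13; 4; 6]); (4, [:: 7; 13; 11; 4; 6]); (4, [:: 13; 7; 11; 4; 6])])].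

Definition strong_certs : seq (seq nat * seq (nat * seq nat)) := [::
  ([:: 3; 5; 14; 11; 12],
    [:: (1, [:: 3; 3; 13; 14; 11]); (1, [:: 3; 3; 13; 18; 7]); (1, [:: 3; 3; 17; 14; 7]);
        (1, [:: 3; 5; 13; 11; 12]); (1, [:: 3; 5; 13; 13; 10]); (1, [:: 5; 3; 13; 11; 12]);
        (1, [:: 5; 3; 13; 14; 9]); (1, [:: 5; 3; 14; 13; 9]); (1, [:: 5; 5; 13; 11; 10]);
        (2, [:: 2; 3; 13; 14; 11]); (2, [:: 3; 3; 14; 11; 12]); (2, [:: 3; 5; 13; 13; 9]);
        (2, [:: 3; 5; 13; 17; 5]); (2, [:: 3; 5; 14; 11; 10]); (2, [:: 3; 5; 14; 14; 7]);
        (2, [:: 3; 5; 17; 13; 5]); (2, [:: 3; 6; 13; 11; 10]); (2, [:: 6; 3; 13; 11; 10]);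
        (4, [:: 3; 3; 13; 13; 9]); (4, [:: 3; 3; 13; 17; 5]); (4, [:: 3; 3; 14; 14; 7]);
        (4, [:: 3; 3; 17; 13; 5])]);
  ([:: 3; 13; 6; 11; 12],
    [:: (1, [:: 3; 13; 5; 10; 13]); (1, [:: 3; 13; 5; 12; 11]); (1, [:: 5; 5; 9; 11; 14]);
        (1, [:: 5; 5; 9; 14; 11]); (1, [:: 5; 5; 10; 11; 13]); (1, [:: 5; 5; 10; 13; 11]);
        (1, [:: 5; 6; 9; 11; 13]); (1, [:: 5; 6; 9; 13; 11]); (1, [:: 5; 7; 3; 11; 18]);
        (1, [:: 5; 7; 3; 18; 11]); (1, [:: 5; 7; 5; 13; 14]); (1, [:: 5; 7; 5; 14; 13]);
        (1, [:: 5; 7; 6; 13; 13]); (1, [:: 5; 7; 9; 11; 12]); (1, [:: 5; 7; 9; 12; 11]);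
        (1, [:: 5; 7; 10; 11; 11]); (1, [:: 5; 11; 3; 11; 14]); (1, [:: 5; 11; 3; 12; 13]);
        (1, [:: 5; 11; 3; 13; 12]); (1, [:: 5; 11; 3; 14; 11]); (1, [:: 5; 11; 4; 11; 13]);
        (1, [:: 5; 11; 4; 13; 11]); (1, [:: 5; 11; 5; 10; 13]); (1, [:: 5; 11; 5; 11; 12]);
        (1, [:: 5; 11; 6; 11; 11]); (1, [:: 5; 12; 3; 11; 13]); (1, [:: 5; 12; 3; 13; 11]);
        (1, [:: 5; 12; 5; 11; 11]); (1, [:: 5; 13; 5; 10; 11]); (2, [:: 3; 5; 10; 11; 14]);
        (2, [:: 3; 5; 10; 14; 11]); (2, [:: 3; 6; 9; 11; 14]); (2, [:: 3; 6; 9; 14; 11]);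
        (2, [:: 3; 6; 10; 11; 13]); (2, [:: 3; 6; 10; 13; 11]); (2, [:: 3; 7; 3; 13; 17]);
        (2, [:: 3; 7; 3; 17; 13]); (2, [:: 3; 7; 5; 11; 17]); (2, [:: 3; 7; 5; 14; 14]);
        (2, [:: 3; 7; 5; 17; 11]); (2, [:: 3; 7; 6; 13; 14]); (2, [:: 3; 7; 6; 14; 13]);
        (2, [:: 3; 7; 9; 11; 13]); (2, [:: 3; 7; 9; 13; 11]); (2, [:: 3; 7; 10; 11; 12]);
        (2, [:: 3; 7; 10; 12; 11]); (2, [:: 3; 9; 3; 11; 17]); (2, [:: 3; 9; 3; 17; 11]);
        (2, [:: 3; 9; 5; 13; 13]); (2, [:: 3; 9; 9; 11; 11]); (2, [:: 3; 11; 3; 12; 14]);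
        (2, [:: 3; 11; 3; 14; 12]); (2, [:: 3; 11; 4; 11; 14]); (2, [:: 3; 11; 4; 14; 11]);
        (2, [:: 3; 11; 5; 10; 14]); (2, [:: 3; 11; 6; 10; 13]); (2, [:: 3; 11; 6; 11; 12]);
        (2, [:: 3; 12; 3; 11; 14]); (2, [:: 3; 12; 3; 14; 11]); (2, [:: 3; 12; 6; 11; 11]);
        (2, [:: 3; 13; 3; 11; 13]); (2, [:: 3; 13; 3; 13; 11]); (2, [:: 3; 13; 5; 11; 11]);
        (2, [:: 3; 13; 6; 10; 11]); (2, [:: 3; 14; 5; 10; 11]); (2, [:: 6; 11; 5; 10; 11]);
        (4, [:: 3; 5; 3; 13; 17]); (4, [:: 3; 5; 3; 17; 13]); (4, [:: 3; 5; 5; 11; 17]);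
        (4, [:: 3; 5; 5; 17; 11]); (4, [:: 3; 5; 9; 11; 13]); (4, [:: 3; 5; 9; 13; 11]);
        (4, [:: 3; 7; 3; 11; 17]); (4, [:: 3; 7; 3; 17; 11]); (4, [:: 3; 7; 5; 13; 13]);
        (4, [:: 3; 7; 9; 11; 11]); (4, [:: 3; 11; 3; 11; 13]); (4, [:: 3; 11; 3; 13; 11]);
        (4, [:: 3; 11; 5; 11; 11])]);
  ([:: 3; 13; 7; 10; 12],
    [:: (1, [:: 3; 11; 5; 7; 18]); (1, [:: 3; 11; 5; 11; 14]); (1, [:: 3; 11; 9; 7; 14]);
        (1, [:: 5; 3; 7; 11; 18]); (1, [:: 5; 3; 7; 18; 11]); (1, [:: 5; 3; 11; 7; 18]);
        (1, [:: 5; 3; 11; 13; 12]); (1, [:: 5; 3; 11; 14; 11]); (1, [:: 5; 3; 12; 13; 11]);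
        (1, [:: 5; 3; 13; 9; 14]); (1, [:: 5; 3; 13; 10; 13]); (1, [:: 5; 3; 13; 11; 12]);
        (1, [:: 5; 3; 13; 12; 11]); (1, [:: 5; 3; 14; 9; 13]); (1, [:: 5; 3; 14; 11; 11]);
        (1, [:: 5; 3; 18; 7; 11]); (1, [:: 5; 4; 11; 13; 11]); (1, [:: 5; 4; 13; 11; 11]);
        (1, [:: 5; 5; 7; 13; 14]); (1, [:: 5; 5; 7; 14; 13]); (1, [:: 5; 5; 9; 14; 11]);
        (1, [:: 5; 5; 10; 13; 11]); (1, [:: 5; 5; 13; 7; 14]); (1, [:: 5; 5; 13; 10; 11]);
        (1, [:: 5; 5; 14; 7; 13]); (1, [:: 5; 5; 14; 9; 11]); (1, [:: 5; 6; 7; 13; 13]);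
        (1, [:: 5; 6; 9; 13; 11]); (1, [:: 5; 6; 13; 7; 13]); (1, [:: 5; 6; 13; 9; 11]);
        (1, [:: 5; 7; 7; 7; 18]); (1, [:: 5; 7; 7; 11; 14]); (1, [:: 5; 7; 7; 12; 13]);
        (1, [:: 5; 7; 8; 11; 13]); (1, [:: 5; 7; 9; 9; 14]); (1, [:: 5; 7; 9; 10; 13]);
        (1, [:: 5; 7; 9; 11; 12]); (1, [:: 5; 7; 9; 12; 11]); (1, [:: 5; 7; 10; 9; 13]);
        (1, [:: 5; 7; 10; 11; 11]); (1, [:: 5; 7; 11; 7; 14]); (1, [:: 5; 7; 11; 8; 13]);
        (1, [:: 5; 7; 11; 9; 12]); (1, [:: 5; 7; 11; 10; 11]); (1, [:: 5; 7; 12; 7; 13]);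
        (1, [:: 5; 7; 12; 9; 11]); (1, [:: 5; 8; 7; 11; 13]); (1, [:: 5; 8; 11; 7; 13]);
        (1, [:: 5; 11; 7; 7; 14]); (1, [:: 5; 11; 7; 8; 13]); (1, [:: 5; 11; 7; 9; 12]);
        (1, [:: 5; 11; 7; 10; 11]); (1, [:: 5; 11; 8; 7; 13]); (1, [:: 5; 11; 9; 7; 12]);
        (1, [:: 5; 11; 10; 7; 11]); (1, [:: 5; 12; 7; 7; 13]); (1, [:: 5; 12; 7; 9; 11]);
        (1, [:: 5; 12; 9; 7; 11]); (2, [:: 2; 11; 5; 11; 14]); (2, [:: 2; 11; 9; 7; 14]);
        (2, [:: 3; 3; 7; 13; 17]); (2, [:: 3; 3; 7; 17; 13]); (2, [:: 3; 3; 9; 11; 17]);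
        (2, [:: 3; 3; 9; 17; 11]); (2, [:: 3; 3; 11; 9; 17]); (2, [:: 3; 3; 11; 13; 13]);
        (2, [:: 3; 3; 11; 14; 12]); (2, [:: 3; 3; 12; 14; 11]); (2, [:: 3; 3; 13; 7; 17]);
        (2, [:: 3; 3; 13; 10; 14]); (2, [:: 3; 3; 13; 11; 13]); (2, [:: 3; 3; 14; 9; 14]);
        (2, [:: 3; 3; 14; 10; 13]); (2, [:: 3; 3; 14; 11; 12]); (2, [:: 3; 3; 14; 12; 11]);
        (2, [:: 3; 3; 17; 7; 13]); (2, [:: 3; 3; 17; 9; 11]); (2, [:: 3; 4; 11; 14; 11]);
        (2, [:: 3; 4; 14; 11; 11]); (2, [:: 3; 5; 5; 13; 17]); (2, [:: 3; 5; 5; 17; 13]);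
        (2, [:: 3; 5; 7; 11; 17]); (2, [:: 3; 5; 7; 14; 14]); (2, [:: 3; 5; 7; 17; 11]);
        (2, [:: 3; 5; 10; 14; 11]); (2, [:: 3; 5; 11; 7; 17]); (2, [:: 3; 5; 11; 13; 11]);
        (2, [:: 3; 5; 13; 9; 13]); (2, [:: 3; 5; 13; 11; 11]); (2, [:: 3; 5; 14; 7; 14]);
        (2, [:: 3; 5; 14; 10; 11]); (2, [:: 3; 5; 17; 7; 11]); (2, [:: 3; 6; 7; 13; 14]);
        (2, [:: 3; 6; 7; 14; 13]); (2, [:: 3; 6; 9; 14; 11]); (2, [:: 3; 6; 10; 13; 11]);
        (2, [:: 3; 6; 13; 7; 14]); (2, [:: 3; 6; 13; 10; 11]); (2, [:: 3; 6; 14; 7; 13]);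
        (2, [:: 3; 6; 14; 9; 11]); (2, [:: 3; 7; 7; 9; 17]); (2, [:: 3; 7; 7; 12; 14]);
        (2, [:: 3; 7; 7; 13; 13]); (2, [:: 3; 7; 8; 11; 14]); (2, [:: 3; 7; 9; 7; 17]);
        (2, [:: 3; 7; 9; 10; 14]); (2, [:: 3; 7; 9; 13; 11]); (2, [:: 3; 7; 10; 9; 14]);
        (2, [:: 3; 7; 10; 10; 13]); (2, [:: 3; 7; 10; 11; 12]); (2, [:: 3; 7; 10; 12; 11]);
        (2, [:: 3; 7; 11; 8; 14]); (2, [:: 3; 7; 11; 10; 12]); (2, [:: 3; 7; 12; 7; 14]);
        (2, [:: 3; 7; 12; 10; 11]); (2, [:: 3; 7; 13; 7; 13]); (2, [:: 3; 7; 13; 9; 11]);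
        (2, [:: 3; 8; 7; 11; 14]); (2, [:: 3; 8; 11; 7; 14]); (2, [:: 3; 9; 7; 7; 17]);
        (2, [:: 3; 9; 7; 11; 13]); (2, [:: 3; 9; 9; 9; 13]); (2, [:: 3; 9; 9; 11; 11]);
        (2, [:: 3; 9; 11; 7; 13]); (2, [:: 3; 9; 11; 9; 11]); (2, [:: 3; 11; 6; 9; 14]);
        (2, [:: 3; 11; 7; 8; 14]); (2, [:: 3; 11; 7; 10; 12]); (2, [:: 3; 11; 10; 7; 12]);
        (2, [:: 3; 12; 7; 7; 14]); (2, [:: 3; 12; 7; 10; 11]); (2, [:: 3; 12; 10; 7; 11]);
        (2, [:: 3; 13; 6; 7; 14]); (2, [:: 3; 13; 7; 7; 13]); (2, [:: 3; 13; 7; 9; 11]);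
        (2, [:: 3; 13; 9; 7; 11]); (4, [:: 3; 3; 5; 13; 17]); (4, [:: 3; 3; 5; 17; 13]);
        (4, [:: 3; 3; 7; 11; 17]); (4, [:: 3; 3; 7; 17; 11]); (4, [:: 3; 3; 11; 7; 17]);
        (4, [:: 3; 3; 11; 13; 11]); (4, [:: 3; 3; 13; 9; 13]); (4, [:: 3; 3; 13; 11; 11]);
        (4, [:: 3; 3; 17; 7; 11]); (4, [:: 3; 5; 7; 9; 17]); (4, [:: 3; 5; 7; 13; 13]);
        (4, [:: 3; 5; 9; 7; 17]); (4, [:: 3; 5; 9; 13; 11]); (4, [:: 3; 5; 13; 7; 13]);
        (4, [:: 3; 5; 13; 9; 11]); (4, [:: 3; 7; 7; 7; 17]); (4, [:: 3; 7; 7; 11; 13]);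
        (4, [:: 3; 7; 9; 9; 13]); (4, [:: 3; 7; 9; 11; 11]); (4, [:: 3; 7; 11; 7; 13]);
        (4, [:: 3; 7; 11; 9; 11]); (4, [:: 3; 11; 6; 7; 14]); (4, [:: 3; 11; 7; 7; 13]);
        (4, [:: 3; 11; 7; 9; 11]); (4, [:: 3; 11; 9; 7; 11]); (4, [:: 3; 13; 6; 7; 12])]);
  ([:: 3; 13; 14; 3; 12],
    [:: (1, [:: 3; 13; 13; 2; 13]); (1, [:: 3; 13; 13; 4; 11]); (1, [:: 5; 5; 11; 9; 14]);
        (1, [:: 5; 5; 11; 10; 13]); (1, [:: 5; 5; 13; 10; 11]); (1, [:: 5; 5; 14; 9; 11]);
        (1, [:: 5; 6; 11; 9; 13]); (1, [:: 5; 6; 13; 9; 11]); (1, [:: 5; 7; 11; 3; 18]);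
        (1, [:: 5; 7; 11; 9; 12]); (1, [:: 5; 7; 11; 10; 11]); (1, [:: 5; 7; 12; 9; 11]);
        (1, [:: 5; 7; 13; 5; 14]); (1, [:: 5; 7; 13; 6; 13]); (1, [:: 5; 7; 14; 5; 13]);
        (1, [:: 5; 7; 18; 3; 11]); (1, [:: 5; 11; 11; 3; 14]); (1, [:: 5; 11; 11; 4; 13]);
        (1, [:: 5; 11; 11; 5; 12]); (1, [:: 5; 11; 11; 6; 11]); (1, [:: 5; 11; 12; 3; 13]);
        (1, [:: 5; 11; 12; 5; 11]); (1, [:: 5; 11; 13; 2; 13]); (1, [:: 5; 11; 13; 3; 12]);
        (1, [:: 5; 11; 14; 3; 11]); (1, [:: 5; 12; 11; 3; 13]); (1, [:: 5; 12; 11; 5; 11]);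
        (1, [:: 5; 12; 13; 3; 11]); (1, [:: 5; 13; 13; 2; 11]); (2, [:: 3; 5; 11; 10; 14]);
        (2, [:: 3; 5; 14; 10; 11]); (2, [:: 3; 6; 11; 9; 14]); (2, [:: 3; 6; 11; 10; 13]);
        (2, [:: 3; 6; 13; 10; 11]); (2, [:: 3; 6; 14; 9; 11]); (2, [:: 3; 7; 11; 5; 17]);
        (2, [:: 3; 7; 11; 9; 13]); (2, [:: 3; 7; 11; 10; 12]); (2, [:: 3; 7; 12; 10; 11]);
        (2, [:: 3; 7; 13; 3; 17]); (2, [:: 3; 7; 13; 6; 14]); (2, [:: 3; 7; 13; 9; 11]);
        (2, [:: 3; 7; 14; 5; 14]); (2, [:: 3; 7; 14; 6; 13]); (2, [:: 3; 7; 17; 3; 13]);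
        (2, [:: 3; 7; 17; 5; 11]); (2, [:: 3; 9; 11; 3; 17]); (2, [:: 3; 9; 11; 9; 11]);
        (2, [:: 3; 9; 13; 5; 13]); (2, [:: 3; 9; 17; 3; 11]); (2, [:: 3; 11; 11; 4; 14]);
        (2, [:: 3; 11; 11; 6; 12]); (2, [:: 3; 11; 12; 3; 14]); (2, [:: 3; 11; 12; 6; 11]);
        (2, [:: 3; 11; 13; 2; 14]); (2, [:: 3; 11; 14; 2; 13]); (2, [:: 3; 11; 14; 3; 12]);
        (2, [:: 3; 12; 11; 3; 14]); (2, [:: 3; 12; 11; 6; 11]); (2, [:: 3; 12; 14; 3; 11]);
        (2, [:: 3; 13; 11; 3; 13]); (2, [:: 3; 13; 11; 5; 11]); (2, [:: 3; 13; 13; 3; 11]);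
        (2, [:: 3; 13; 14; 2; 11]); (2, [:: 3; 14; 13; 2; 11]); (2, [:: 6; 11; 13; 2; 11]);
        (4, [:: 3; 5; 11; 5; 17]); (4, [:: 3; 5; 11; 9; 13]); (4, [:: 3; 5; 13; 3; 17]);
        (4, [:: 3; 5; 13; 9; 11]); (4, [:: 3; 5; 17; 3; 13]); (4, [:: 3; 5; 17; 5; 11]);
        (4, [:: 3; 7; 11; 3; 17]); (4, [:: 3; 7; 11; 9; 11]); (4, [:: 3; 7; 13; 5; 13]);
        (4, [:: 3; 7; 17; 3; 11]); (4, [:: 3; 11; 11; 3; 13]); (4, [:: 3; 11; 11; 5; 11]);
        (4, [:: 3; 11; 13; 3; 11])])].

Lemma strict_certs_ok : all (fun c => certifies c.1 c.2) strict_certs.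
Proof. by vm_compute. Qed.

Lemma strong_certs_ok : all (fun c => certifies c.1 c.2) strong_certs.
Proof. by vm_compute. Qed.

Theorem lemma4 :
  (forall x, x \in [:: mono5 3 5 9 14 14; mono5 3 5 14 9 14; mono5 3 7 11 12 12;
                      mono5 3 7 13 8 14; mono5 3 7 13 14 8; mono5 3 12 3 13 14;
                      mono5 7 3 11 12 12; mono5 7 3 13 8 14; mono5 7 3 13 14 8;
                      mono5 7 7 9 14 8; mono5 7 9 7 10 12; mono5 7 11 3 12 12;
                      mono5 7 11 5 8 14; mono5 7 11 5 14 8; mono5 7 11 13 6 8] ->
     strictly_inadmissible x) /\
  (forall x, x \in [:: mono5 3 5 14 11 12; mono5 3 13 6 11 12;
                      mono5 3 13 7 10 12; mono5 3 13 14 3 12] ->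
     strongly_inadmissible x).
Proof.
(* [mono5 a b c d e] is convertible to [mono_of [:: a; b; c; d; e]]. *)
split=> x x_in.
- have /mapP [c c_in ->] : x \in [seq mono_of c.1 | c <- strict_certs] := x_in.
  exact: certifies_strictly_inadmissible (allP strict_certs_ok c c_in).
- have /mapP [c c_in ->] : x \in [seq mono_of c.1 | c <- strong_certs] := x_in.
  exact: certifies_strongly_inadmissible (allP strong_certs_ok c c_in).
Qed.
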